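(* Let $L$ be a (right) Leibniz algebra, let $k\geq 1$ be an integer and let $B$ be an ideal of $L$ which is $\mathrm{Es}_k$-right nil. Let $P$ be a product of elements of $L$ (arbitrary bracketing) having at least $t$ factors in $B$, where $t\geq 4k^2-2k+1$. Then $P$ is a finite linear combination $P=\sum_j\mu_jQ_j$ ($\mu_j\in F$) of right products $Q_j$ of elements of $L$ such that, for each $j$, either $Q_j\in (B^k)_{(L,k)}$ or $Q_j$ has at least one factor belonging to $(B^k)_{(L,k)}$.
   Context: A (right) Leibniz algebra is a vector space $L$ over a field $F$ (characteristic $\neq 2$, finite-dimensional) with a bilinear product $(x,y)\mapsto xy$ satisfying $x(yz)=(xy)z-(xz)y$. For subspaces $U,V$, $UV$ is the span of all $uv$; right powers $B^1=B$, $B^{j+1}=B^jB$. An ideal is a subspace $B$ with $LB\subseteq B$, $BL\subseteq B$. Right product: $s_p\cdots s_1:=((\cdots((s_ps_{p-1})s_{p-2})\cdots)s_2)s_1$, with factors $s_1,\dots,s_p$. For a subspace $D\subseteq L$ and $k\geq 1$, $D_{(L,k)}$ is the span of all right products $d\,x_k\cdots x_1$ with $d\in D$, $x_i\in L$. $\mathrm{Ess}(L)$ is the ideal generated by all squares $xx$, and $\mathrm{Es}(B)=B\cap\mathrm{Ess}(L)$. A nonzero ideal $B$ is $\mathrm{Es}_k$-right nil if $\mathrm{Es}(B)_{(L,k)}=\{0\}$. *)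

From HB Require Import structures.
From mathcomp Require Import all_boot all_order all_algebra.
Set Implicit Arguments. Unset Strict Implicit. Unset Printing Implicit Defensive.
Import GRing.Theory.
Local Open Scope ring_scope.

Section Leibniz.
Variables (F : fieldType) (L : vectType F) (mul : L -> L -> L).

Definition bilinear_mul : Prop :=
  (forall (a : F) (x y z : L), mul (a *: x + y) z = a *: mul x z + mul y z) /\
  (forall (a : F) (x y z : L), mul z (a *: x + y) = a *: mul z x + mul z y).

Definition right_leibniz : Prop :=
  forall x y z : L, mul x (mul y z) = mul (mul x y) z - mul (mul x z) y.

Definition spanP (S : L -> Prop) (x : L) : Prop :=
  exists (n : nat) (c : 'I_n -> F) (v : 'I_n -> L),
    (forall i, S (v i)) /\ x = \sum_(i < n) c i *: v i.

Definition prodsp (U V : L -> Prop) : L -> Prop :=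
  spanP (fun x => exists u v, U u /\ V v /\ x = mul u v).

(* Right product s_p ... s_1 = ((s_p s_{p-1}) ...) s_1, encoded as
   (s_p, [:: s_{p-1}; ...; s_1]); its factors are s_p :: [:: s_{p-1}; ...]. *)
Definition rprod (q : L * seq L) : L := foldl mul q.1 q.2.
Definition rfactors (q : L * seq L) : seq L := q.1 :: q.2.

(* Right powers: rpow B 1 = B, rpow B (j+1) = (rpow B j) B. *)
Fixpoint rpow_aux (B : L -> Prop) (n : nat) : L -> Prop :=
  match n with
  | 0 => B
  | n'.+1 => prodsp (rpow_aux B n') B
  end.
Definition rpow (B : L -> Prop) (j : nat) : L -> Prop := rpow_aux B j.-1.

Definition DLk (D : L -> Prop) (k : nat) : L -> Prop :=
  spanP (fun y => exists d (xs : seq L), D d /\ size xs = k /\ y = rprod (d, xs)).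

Definition is_ideal (B : {vspace L}) : Prop :=
  forall x b : L, b \in B -> (mul x b \in B) /\ (mul b x \in B).

(* Ess(L): the ideal generated by all squares x x. *)
Definition Ess (x : L) : Prop :=
  forall I : {vspace L}, is_ideal I -> (forall y, mul y y \in I) -> x \in I.

Definition Es (B : {vspace L}) (x : L) : Prop := x \in B /\ Ess x.

Definition Es_right_nil (k : nat) (B : {vspace L}) : Prop :=
  B != 0%VS /\ (forall x, DLk (Es B) k x -> x = 0).

End Leibniz.

(* Products with arbitrary bracketing: binary trees with leaves in L. *)
Inductive btree (T : Type) : Type :=
  | Leaf of T
  | Node of btree T & btree T.
Arguments Leaf {T} _.
Arguments Node {T} _ _.

Fixpoint beval (T : Type) (mul : T -> T -> T) (P : btree T) : T :=
  match P with
  | Leaf x => x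
  | Node P1 P2 => mul (beval mul P1) (beval mul P2)
  end.

Fixpoint bleaves (T : Type) (P : btree T) : seq T :=
  match P with
  | Leaf x => [:: x]
  | Node P1 P2 => bleaves P1 ++ bleaves P2
  end.

From HB Require Import structures.
From mathcomp Require Import all_boot all_order all_algebra.
From mathcomp Require Import zify.

Set Implicit Arguments.
Unset Strict Implicit.
Unset Printing Implicit Defensive.

Import GRing.Theory.
Local Open Scope ring_scope.

(** Rewriting with the right Leibniz identity turns any bracketing of a product
    into a linear combination of right products with the same factors. A right
    product with at least [j] factors in the ideal [B] lies in [B^j], because
    [B^j] is itself an ideal. Hence a right product with at least [2k] factors
    in [B] is [d x_k ... x_1] with [d] in [B^k]: cut off its last [k] factors,
    which contain at most [k] elements of [B]. So [P] itself already lies in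
    [(B^k)_(L,k)]. *)

Section LinearClosure.
Variables (F : fieldType) (L : vectType F).

Inductive lin_closure (S : L -> Prop) : L -> Prop :=
  | lin_closure0 : lin_closure S 0
  | lin_closure_gen v : S v -> lin_closure S v
  | lin_closure_comb (a : F) x y :
      lin_closure S x -> lin_closure S y -> lin_closure S (a *: x + y).

Lemma spanP_comb (S : L -> Prop) (a : F) x y :
  spanP S x -> spanP S y -> spanP S (a *: x + y).
Proof.
move=> [n1 [c1 [v1 [Sv1 ->]]]] [n2 [c2 [v2 [Sv2 ->]]]].
exists (n1 + n2)%N.
exists (fun i => match split i with inl i => a * c1 i | inr i => c2 i end).
exists (fun i => match split i with inl i => v1 i | inr i => v2 i end).
split; first by move=> i; case: (split i).
rewrite big_split_ord /= scaler_sumr; congr (_ + _); apply: eq_bigr => i _.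
  by rewrite -[lshift _ _]/(unsplit (inl i)) unsplitK scalerA.
by rewrite -[rshift _ _]/(unsplit (inr i)) unsplitK.
Qed.

Lemma lin_closureE (S : L -> Prop) v : lin_closure S v <-> spanP S v.
Proof.
split.
  elim=> [|w Sw|a x y _ spx _ spy]; last exact: spanP_comb.
  - by exists 0%N, (fun _ => 0), (fun _ => 0); split=> [[]//|]; rewrite big_ord0.
  - by exists 1%N, (fun _ => 1), (fun _ => w); split; rewrite // big_ord1 scale1r.
move=> [n [c [w [Sw ->]]]]; elim: n c w Sw => [|n IHn] c w Sw.
  by rewrite big_ord0; apply: lin_closure0.
rewrite big_ord_recr /= addrC.
by apply: lin_closure_comb; [apply: lin_closure_gen | apply: IHn].
Qed.

Lemma lin_closureS (S S' : L -> Prop) v :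
  (forall s, S s -> S' s) -> lin_closure S v -> lin_closure S' v.
Proof.
move=> sSS'; elim=> [|w Sw|a x y _ hx _ hy].
- exact: lin_closure0.
- by apply: lin_closure_gen; apply: sSS'.
- exact: lin_closure_comb.
Qed.

End LinearClosure.

Section RightProducts.
Variables (F : fieldType) (L : vectType F) (mul : L -> L -> L).
Hypotheses (hbil : bilinear_mul mul) (hleib : right_leibniz mul).

Lemma mul0x z : mul 0 z = 0.
Proof.
have := hbil.1 1 0 0 z; rewrite !scale1r !addr0 => /eqP.
by rewrite -subr_eq0 opprD addrA subrr add0r oppr_eq0 => /eqP.
Qed.

Lemma lin_closure_mulr (S S' : L -> Prop) x u :
  (forall s, S s -> lin_closure S' (mul s x)) ->
  lin_closure S u -> lin_closure S' (mul u x).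
Proof.
move=> hS; elim=> [|w Sw|a y z _ hy _ hz].
- by rewrite mul0x; apply: lin_closure0.
- exact: hS.
- by rewrite hbil.1; apply: lin_closure_comb.
Qed.

Variable B : {vspace L}.

Local Notation countB := (count (fun x => x \in B)).

Definition rprods_countB (c : nat) (v : L) : Prop :=
  exists q, (c <= countB (rfactors q))%N /\ v = rprod mul q.

Lemma lin_closure_mul_beval c (P : btree L) v :
  lin_closure (rprods_countB c) v ->
  lin_closure (rprods_countB (c + countB (bleaves P))) (mul v (beval mul P)).
Proof.
elim: P c v => [x|P1 IH1 P2 IH2] c v cv /=.
  apply: lin_closure_mulr cv => _ [[a xs] [cq ->]]; apply: lin_closure_gen.
  exists (a, rcons xs x); split; last by rewrite /rprod /= foldl_rcons.
  by move: cq; rewrite /rfactors /= -cats1 count_cat /= addn0 addnA leq_add2r.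
have -> : mul v (mul (beval mul P1) (beval mul P2)) =
    (-1) *: mul (mul v (beval mul P2)) (beval mul P1)
    + mul (mul v (beval mul P1)) (beval mul P2).
  by rewrite hleib scaleN1r addrC.
rewrite count_cat addnA; apply: lin_closure_comb; last exact: IH2 (IH1 _ _ cv).
by rewrite addnAC; exact: IH1 (IH2 _ _ cv).
Qed.

Lemma beval_rprods (P : btree L) :
  lin_closure (rprods_countB (countB (bleaves P))) (beval mul P).
Proof.
elim: P => [x|P1 IH1 P2 IH2] /=; first by apply: lin_closure_gen; exists (x, [::]).
by rewrite count_cat; apply: lin_closure_mul_beval.
Qed.

Hypothesis hideal : is_ideal mul B.

Lemma rpow_aux_mulr j u x :
  rpow_aux mul (fun x => x \in B) j u -> rpow_aux mul (fun x => x \in B) j (mul u x).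
Proof.
elim: j u => [|j IHj] u /=; first by move=> Bu; case: (hideal x Bu).
move=> /lin_closureE Bju; apply/lin_closureE.
apply: lin_closure_mulr Bju => _ [u' [b [Bju' [Bb ->]]]].
have -> : mul (mul u' b) x = 1 *: mul u' (mul b x) + mul (mul u' x) b.
  by rewrite scale1r hleib subrK.
apply: lin_closure_comb; apply: lin_closure_gen.
  by exists u', (mul b x); do 2!split=> //; case: (hideal x Bb).
by exists (mul u' x), b; split=> //; apply: IHj.
Qed.

Lemma rprod_rpow_aux j q :
  (j < countB (rfactors q))%N -> rpow_aux mul (fun x => x \in B) j (rprod mul q).
Proof.
case: q => a ws; rewrite /rfactors.
elim/last_ind: ws j => [|ws x IHws] j.
  by rewrite /= addn0; case: j => [|j]; [rewrite lt0b | case: (a \in B)].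
rewrite /rprod /= foldl_rcons -/(rprod mul (a, ws)) -cats1 count_cat /=.
rewrite addn0 => jlt; have [j_lt|ws_le_j] := ltnP j (countB (a :: ws)).
  exact/rpow_aux_mulr/IHws.
have Bx : x \in B by case: (x \in B) jlt; rewrite // addn0 ltnNge ws_le_j.
have -> : j = countB (a :: ws).
  by apply/eqP; rewrite eqn_leq ws_le_j andbT; move: jlt; rewrite Bx addnA addn1 ltnS.
case ec: (countB (a :: ws)) => [|i] /=; first by case: (hideal (rprod mul (a, ws)) Bx).
apply/lin_closureE/lin_closure_gen; exists (rprod mul (a, ws)), x.
by split=> //; apply: IHws; rewrite ec.
Qed.

Lemma rprod_DLk_gen k q :
  (0 < k)%N -> (2 * k <= countB (rfactors q))%N ->
  exists d (xs : seq L),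
    rpow mul (fun x => x \in B) k d /\ size xs = k /\ rprod mul q = rprod mul (d, xs).
Proof.
case: q => a zs k_gt0 cq.
have count_split : countB (a :: zs) =
    countB (a :: take (size zs - k) zs) + countB (drop (size zs - k) zs).
  by rewrite -{1}(cat_take_drop (size zs - k) zs) -cat_cons count_cat.
have size_drop_k : size (drop (size zs - k) zs) = k.
  have := count_size (fun x => x \in B) zs.
  by move: cq; rewrite size_drop /rfactors /=; lia.
exists (rprod mul (a, take (size zs - k) zs)), (drop (size zs - k) zs); split; last split.
- apply: rprod_rpow_aux; have := count_size (fun x => x \in B) (drop (size zs - k) zs).
  by move: cq count_split; rewrite size_drop_k /rfactors /=; lia.
- exact: size_drop_k.
- by rewrite /rprod /= -foldl_cat cat_take_drop.
Qed.

End RightProducts.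

Theorem lemma4p4 (F : fieldType) (L : vectType F) (mul : L -> L -> L)
  (hchar : (2%:R : F) != 0)
  (hbil : bilinear_mul mul) (hleib : right_leibniz mul)
  (k : nat) (hk : (1 <= k)%N)
  (B : {vspace L}) (hideal : is_ideal mul B) (hnil : Es_right_nil mul k B)
  (t : nat) (ht : (4 * k ^ 2 - 2 * k + 1 <= t)%N)
  (P : btree L) (hP : (t <= count (fun x => x \in B) (bleaves P))%N) :
  let T := DLk mul (rpow mul (fun x => x \in B) k) k in
  exists (n : nat) (mu : 'I_n -> F) (Q : 'I_n -> L * seq L),
    beval mul P = \sum_(j < n) mu j *: rprod mul (Q j) /\
    (forall j, T (rprod mul (Q j)) \/ exists2 x, x \in rfactors (Q j) & T x).
Proof.
move=> T.
have TP : T (beval mul P).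
  apply/lin_closureE; apply: lin_closureS (beval_rprods hbil hleib B P).
  move=> _ [q [cq ->]]; apply: rprod_DLk_gen => //.
  by apply: leq_trans cq; apply: leq_trans hP; apply: leq_trans ht; nia.
exists 1%N, (fun _ => 1), (fun _ => (beval mul P, [::])).
by split=> [|_]; [rewrite big_ord1 scale1r | left].
Qed.
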